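(* Let $s>0$, $Y>3s$, and for $\tau\geq0$ put $x_+(\tau)=\frac sYe^{s\tau}$, $\tau^*=\frac1s\ln\left(\frac Y{3s}\right)$, and consider the characteristic equation \[ \lambda^2+p(\tau)\lambda+(q\lambda+c(\tau))e^{-\lambda\tau}+\alpha(\tau)=0, \tag{C} \] with $p(\tau)=s\left(1+\frac{e^{s\tau}}{Y}\right)$, $q=-s$, $c(\tau)=s\left(1-\frac{2se^{s\tau}}{Y}\right)$, $\alpha(\tau)=\frac{s^2e^{s\tau}}{Y}$. Define for $\tau\in[0,\tau^*]$ \[ \omega_+(\tau)=\sqrt{\tfrac12\left(-x_+(\tau)^2+\sqrt{x_+(\tau)^4+s^2\left(12x_+(\tau)^2-16x_+(\tau)+4\right)}\right)}, \] \[ h_2(\omega,\tau)=\frac{\omega^2(1+s-x_+(\tau))-(1-2x_+(\tau))s\,x_+(\tau)}{s\left((1-2x_+(\tau))^2+\omega^2\right)}, \qquad \theta(\tau)=\arccos\big(h_2(\omega_+(\tau),\tau)\big)\in[0,\pi]. \] For each integer $n\geq0$, let $\tau_n^1<\tau_n^2<\dots<\tau_n^{j_n}$ denote the points $\tau\in(0,\tau^* )$ at which $\tau\omega_+(\tau)=\theta(\tau)+2n\pi$. Then (C) has a pair of purely imaginary roots if and only if $\tau=\tau_n^j\in(0,\tau^* )$ for some integer $n\geq0$ and some $j$. At every such $\tau_n^j$, the pair of purely imaginary roots $\pm i\omega_+(\tau_n^j)$ is simple and no other root of (C) is an integer multiple of $i\omega_+(\tau_n^j)$. If, in addition, $\frac{d}{d\tau}(\tau\omega_+(\tau))\big|_{\tau=\tau_n^j}\neq\frac{d}{d\tau}\theta(\tau)\big|_{\tau=\tau_n^j}$,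 then the transversality condition $\frac{d}{d\tau}\operatorname{Re}\lambda(\tau)\big|_{\tau=\tau_n^j}\neq0$ holds for the root branch $\lambda(\tau)$ with $\lambda(\tau_n^j)=i\omega_+(\tau_n^j)$.
   Context: (C) is the characteristic equation of the linearization of the delay system $\dot x=x(1-x)-yx$, $\dot y=-sy+Ye^{-s\tau}y(t-\tau)x(t-\tau)$ at its coexistence equilibrium $E_+=(x_+(\tau),1-x_+(\tau))$, which has positive components for $\tau\in[0,\tau^*]$ when $Y>3s$. The function $\theta$ is well defined and continuously differentiable on $[0,\tau^*]$. *)

From Stdlib Require Export Reals.
From Coquelicot Require Export Coquelicot.
Open Scope R_scope.

Definition Cexp (z : C) : C :=
  (exp (Re z) * cos (Im z), exp (Re z) * sin (Im z)).

Definition x_plus (s Y tau : R) : R := s / Y * exp (s * tau).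

Definition tau_star (s Y : R) : R := / s * ln (Y / (3 * s)).

Definition p_coef (s Y tau : R) : R := s * (1 + exp (s * tau) / Y).
Definition q_coef (s : R) : R := - s.
Definition c_coef (s Y tau : R) : R := s * (1 - 2 * s * exp (s * tau) / Y).
Definition alpha_coef (s Y tau : R) : R := s ^ 2 * exp (s * tau) / Y.

Definition charfun (s Y tau : R) (lam : C) : C :=
  (lam * lam + RtoC (p_coef s Y tau) * lam
   + (RtoC (q_coef s) * lam + RtoC (c_coef s Y tau)) * Cexp (- lam * RtoC tau)
   + RtoC (alpha_coef s Y tau))%C.

Definition omega_plus (s Y tau : R) : R :=
  let x := x_plus s Y tau in
  sqrt (/ 2 * (- x ^ 2 + sqrt (x ^ 4 + s ^ 2 * (12 * x ^ 2 - 16 * x + 4)))).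

Definition h2 (s Y omega tau : R) : R :=
  let x := x_plus s Y tau in
  (omega ^ 2 * (1 + s - x) - (1 - 2 * x) * s * x)
  / (s * ((1 - 2 * x) ^ 2 + omega ^ 2)).

Definition theta (s Y tau : R) : R := acos (h2 s Y (omega_plus s Y tau) tau).

(* tau is one of the points tau_n^1 < ... < tau_n^{j_n} : a point of (0, tau^* )
   at which tau * omega_+(tau) = theta(tau) + 2 n pi *)
Definition is_tau_n (s Y : R) (n : nat) (tau : R) : Prop :=
  0 < tau < tau_star s Y /\
  tau * omega_plus s Y tau = theta s Y tau + 2 * INR n * PI.

From Stdlib Require Import Reals ZArith Lra Psatz.
From Coquelicot Require Import Coquelicot.
Open Scope R_scope.

(* On the imaginary axis, (C) reads [P(i w) + Q(i w) exp (- i w tau) = 0] with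
   [P(l) = l^2 + (s + x) l + s x], [Q(l) = s (1 - 2 x) - s l] and [x = x_+(tau)].
   Taking moduli, a root [i w] forces [|P(i w)| = |Q(i w)|], i.e.
   [w^4 + x^2 w^2 = s^2 (1 - x) (1 - 3 x)]: for [0 < x < 1/3] its only positive solution is
   [omega_+(tau)], and at [x = 1/3] (that is, [tau = tau^*]) there is none.  The root condition
   then fixes [cos (w tau) = h2] and [sin (w tau) > 0], so [w tau = theta(tau) + 2 n pi], with
   [n >= 0] because [tau > 0] and [theta <= pi].  The root is simple since the imaginary part
   of the derivative of (C) there is [2 w + s sin (w tau) + tau (s + x) w > 0], and a root
   [i k omega_+] satisfies the same modulus equation, which forces [k = 1] or [k = -1].
   Finally, if a root branch [lam] through [i omega_+] had [Re lam' = 0], differentiating the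
   modulus relation would give [Im lam' = omega_+'], and differentiating
   [cos (tau Im lam) = h2] would then give [(tau omega_+)' = theta']. *)

Lemma exp_sub_1_sub_bound a : Rabs a <= / 2 -> Rabs (exp a - 1 - a) <= 2 * a ^ 2.
Proof.
  intros Ha; apply Rabs_le_between in Ha.
  assert (Hlow := exp_ineq1_le a).
  assert (Hup : exp a * (1 - a) <= 1).
  { assert (H := exp_ineq1_le (- a)); rewrite exp_Ropp in H.
    apply Rmult_le_compat_l with (r := exp a) in H; [| left; apply exp_pos].
    rewrite Rinv_r in H by (apply Rgt_not_eq, exp_pos); nra. }
  apply Rabs_le; split; nra.
Qed.

Lemma cos_sub_1_bound b : Rabs b <= / 2 -> Rabs (cos b - 1) <= b ^ 2 / 2.
Proof.
  intros Hb; apply Rabs_le_between in Hb.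
  assert (HPI := PI2_1).
  destruct (cos_bound b 0) as [Hlow _]; [lra | lra |].
  replace (cos_approx b (2 * 0 + 1)) with (1 - b ^ 2 / 2) in Hlow
    by (unfold cos_approx, cos_term; simpl; field).
  assert (Hup := COS_bound b).
  apply Rabs_le; split; nra.
Qed.

Lemma sin_sub_id_bound_pos b : 0 <= b <= / 2 -> Rabs (sin b - b) <= b ^ 2 / 2.
Proof.
  intros Hb.
  assert (HPI := PI2_1).
  destruct (sin_bound b 0) as [Hlow Hup]; [lra | lra |].
  replace (sin_approx b (2 * 0 + 1)) with (b - b ^ 3 / 6) in Hlow
    by (unfold sin_approx, sin_term; simpl; field).
  replace (sin_approx b (2 * (0 + 1))) with (b - b ^ 3 / 6 + b ^ 5 / 120) in Hup
    by (unfold sin_approx, sin_term; simpl; field).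
  assert (Hb2 : 0 <= b ^ 2 <= / 4) by nra.
  assert (Hb3 : b ^ 3 <= b ^ 2 / 2) by (replace (b ^ 3) with (b * b ^ 2) by ring; nra).
  assert (Hb5 : b ^ 5 <= b ^ 3) by (replace (b ^ 5) with (b ^ 2 * b ^ 3) by ring; nra).
  apply Rabs_le; split; nra.
Qed.

Lemma sin_sub_id_bound b : Rabs b <= / 2 -> Rabs (sin b - b) <= b ^ 2 / 2.
Proof.
  intros Hb; apply Rabs_le_between in Hb.
  destruct (Rle_dec 0 b).
  - apply sin_sub_id_bound_pos; lra.
  - replace (sin b - b) with (- (sin (- b) - - b)) by (rewrite sin_neg; ring).
    rewrite Rabs_Ropp; replace (b ^ 2) with ((- b) ^ 2) by ring.
    apply sin_sub_id_bound_pos; lra.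
Qed.

Lemma is_derive_acos y : -1 < y < 1 -> is_derive acos y (-1 / sqrt (1 - y ^ 2)).
Proof.
  intros Hy; apply is_derive_Reals.
  rewrite <- Rsqr_pow2, <- (derive_pt_acos y Hy).
  apply derive_pt_eq_1 with (derivable_pt_acos y Hy); reflexivity.
Qed.

Lemma Cexp_add z w : Cexp (z + w) = (Cexp z * Cexp w)%C.
Proof.
  destruct z as [a b], w as [c d]; unfold Cexp; simpl.
  rewrite exp_plus, cos_plus, sin_plus.
  apply injective_projections; simpl; ring.
Qed.

Lemma Cexp_sub_1_sub_bound h : Cmod h <= / 2 -> Cmod (Cexp h - 1 - h)%C <= 10 * Cmod h ^ 2.
Proof.
  destruct h as [a b]; intros Hh.
  assert (Hm := Rmax_Cmod (a, b)); simpl fst in Hm; simpl snd in Hm.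
  set (m := Cmod (a, b)) in *.
  assert (Ha : - m <= a <= m) by (apply Rabs_le_between, (Rle_trans _ _ _ (Rmax_l _ _) Hm)).
  assert (Hb : - m <= b <= m) by (apply Rabs_le_between, (Rle_trans _ _ _ (Rmax_r _ _) Hm)).
  assert (Ea := exp_sub_1_sub_bound a ltac:(apply Rabs_le; lra)).
  assert (Cb := cos_sub_1_bound b ltac:(apply Rabs_le; lra)).
  assert (Sb := sin_sub_id_bound b ltac:(apply Rabs_le; lra)).
  apply Rabs_le_between in Ea, Cb, Sb.
  assert (Hcos := COS_bound b); assert (Hsin := SIN_bound b).
  assert (Hre : Rabs (exp a * cos b - 1 - a) <= 5 * m ^ 2).
  { replace (exp a * cos b - 1 - a)
      with ((exp a - 1 - a) * cos b + (1 + a) * (cos b - 1)) by ring.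
    apply Rabs_le; split; nra. }
  assert (Him : Rabs (exp a * sin b - b) <= 5 * m ^ 2).
  { replace (exp a * sin b - b)
      with ((exp a - 1 - a) * sin b + a * sin b + (sin b - b)) by ring.
    apply Rabs_le; split; nra. }
  assert (Hsqrt2 : sqrt 2 <= 2).
  { rewrite <- (sqrt_pow2 2) at 2 by lra; apply sqrt_le_1_alt; lra. }
  eapply Rle_trans; [apply Cmod_2Rmax |]; unfold Cexp; simpl.
  replace (exp a * cos b + - (1) + - a) with (exp a * cos b - 1 - a) by ring.
  replace (exp a * sin b + - 0 + - b) with (exp a * sin b - b) by ring.
  assert (Hmax := Rmax_lub _ _ _ Hre Him).
  assert (0 <= Rmax (Rabs (exp a * cos b - 1 - a)) (Rabs (exp a * sin b - b)))
    by (eapply Rle_trans; [apply Rabs_pos | apply Rmax_l]).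
  nra.
Qed.

(* Coquelicot states the product and identity rules on [AbsRing_NormedModule C_AbsRing]
   rather than on the default [C_NormedModule]; both carry the norm [Cmod]. *)
Local Notation is_derive_C f z l :=
  (@is_derive C_AbsRing (AbsRing_NormedModule C_AbsRing) f z l).

Lemma is_derive_C_normed (f : C -> C) z l : is_derive_C f z l -> is_derive f z l.
Proof.
  intros [_ Hf]; split; [apply is_linear_scal_l |].
  intros x Hx eps; exact (Hf x Hx eps).
Qed.

Lemma is_derive_C_of_quadratic_bound (f : C -> C) z l K r : 0 <= K -> 0 < r ->
  (forall h, Cmod h <= r -> Cmod (f (z + h) - f z - h * l)%C <= K * Cmod h ^ 2) ->
  is_derive_C f z l.
Proof.
  intros HK Hr Hf; split; [apply is_linear_scal_l |].
  intros x Hx.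
  apply (@is_filter_lim_locally_unique _ (AbsRing_NormedModule C_AbsRing)) in Hx; subst x.
  intros [eps Heps].
  assert (Hd : 0 < Rmin r (eps / (K + 1))) by (apply Rmin_pos; [| apply Rdiv_lt_0_compat]; lra).
  exists (mkposreal _ Hd); intros y Hy.
  change (ball z _ y) with (Cmod (y - z)%C < Rmin r (eps / (K + 1))) in Hy.
  assert (Hh_r := Rmin_l r (eps / (K + 1))); assert (Hh_e := Rmin_r r (eps / (K + 1))).
  assert (HKe : K * (eps / (K + 1)) <= eps)
    by (apply (Rmult_le_reg_r (K + 1)); [lra |]; field_simplify; nra).
  change (Cmod (f y - f z - (y - z) * l)%C <= eps * Cmod (y - z)%C).
  set (h := (y - z)%C) in *; replace y with (z + h)%C by (unfold h; ring).
  assert (Hh := Cmod_ge_0 h).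
  eapply Rle_trans; [apply Hf; lra |].
  assert (0 <= K * Cmod h * (eps / (K + 1) - Cmod h)) by (apply Rmult_le_pos; nra).
  assert (0 <= (eps - K * (eps / (K + 1))) * Cmod h) by (apply Rmult_le_pos; lra).
  nra.
Qed.

Lemma is_derive_Cexp z : is_derive_C Cexp z (Cexp z).
Proof.
  apply (is_derive_C_of_quadratic_bound _ _ _ (Cmod (Cexp z) * 10) (/ 2));
    [apply Rmult_le_pos; [apply Cmod_ge_0 | lra] | lra |].
  intros h Hh.
  replace (Cexp (z + h) - Cexp z - h * Cexp z)%C with (Cexp z * (Cexp h - 1 - h))%C
    by (rewrite Cexp_add; ring).
  rewrite Cmod_mult, Rmult_assoc.
  apply Rmult_le_compat_l; [apply Cmod_ge_0 | now apply Cexp_sub_1_sub_bound].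
Qed.

Lemma is_derive_C_plus (f g : C -> C) z a b : is_derive_C f z a -> is_derive_C g z b ->
  is_derive_C (fun u => f u + g u)%C z (a + b)%C.
Proof. exact (@is_derive_plus _ (AbsRing_NormedModule C_AbsRing) f g z a b). Qed.

Lemma is_derive_C_mult (f g : C -> C) z a b : is_derive_C f z a -> is_derive_C g z b ->
  is_derive_C (fun u => f u * g u)%C z (a * g z + f z * b)%C.
Proof. intros Hf Hg; exact (is_derive_mult f g z a b Hf Hg Cmult_comm). Qed.

Lemma is_derive_C_id z : is_derive_C (fun u => u) z (RtoC 1).
Proof. exact (is_derive_id z). Qed.

Lemma is_derive_C_const (c z : C) : is_derive_C (fun _ => c) z (RtoC 0).
Proof. exact (@is_derive_const _ (AbsRing_NormedModule C_AbsRing) c z). Qed.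

Lemma is_derive_C_Cexp_comp (g : C -> C) z b : is_derive_C g z b ->
  is_derive_C (fun u => Cexp (g u)) z (b * Cexp (g z))%C.
Proof.
  intros Hg.
  exact (@is_derive_comp _ (AbsRing_NormedModule C_AbsRing) Cexp g z _ b (is_derive_Cexp (g z)) Hg).
Qed.

Lemma is_derive_C_opp (f : C -> C) z a : is_derive_C f z a ->
  is_derive_C (fun u => - f u)%C z (- a)%C.
Proof. exact (@is_derive_opp _ (AbsRing_NormedModule C_AbsRing) f z a). Qed.

Definition charfun_deriv (s Y tau : R) (lam : C) : C :=
  let E := Cexp (- lam * RtoC tau) in
  (2 * lam + RtoC (p_coef s Y tau) + RtoC (q_coef s) * E
   - (RtoC (q_coef s) * lam + RtoC (c_coef s Y tau)) * RtoC tau * E)%C.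

Lemma is_derive_charfun s Y tau lam :
  is_derive (charfun s Y tau) lam (charfun_deriv s Y tau lam).
Proof.
  apply is_derive_C_normed.
  evar (d : C); replace (charfun_deriv s Y tau lam) with d.
  - unfold charfun, d.
    assert (Hc : forall c : C, is_derive_C (fun _ => c) lam (RtoC 0))
      by (intros c; apply is_derive_C_const).
    assert (Hlin : forall c : C, is_derive_C (fun u => c * u)%C lam (0 * lam + c * 1)%C)
      by (intros c; apply (is_derive_C_mult (fun _ => c)); [apply Hc | apply is_derive_C_id]).
    apply is_derive_C_plus; [apply is_derive_C_plus; [apply is_derive_C_plus |] | apply Hc].
    + apply is_derive_C_mult; apply is_derive_C_id.
    + apply Hlin.
    + apply is_derive_C_mult; [apply is_derive_C_plus; [apply Hlin | apply Hc] |].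
      apply is_derive_C_Cexp_comp, is_derive_C_mult; [| apply Hc].
      apply is_derive_C_opp, is_derive_C_id.
  - unfold charfun_deriv, d; ring.
Qed.

Section RootsOnImaginaryAxis.

Variables Pr Pi Qr Qi cphi sphi : R.

(* Real and imaginary parts of [P + Q (cphi - i sphi)] for [P = Pr + i Pi] and
   [Q = Qr + i Qi]; with [(cphi, sphi) = (cos phi, sin phi)] this is [P + Q exp (- i phi)]. *)
Definition char_re := Pr + Qr * cphi + Qi * sphi.
Definition char_im := Pi + Qi * cphi - Qr * sphi.

Lemma char_root_of_cos_sin : Qr ^ 2 + Qi ^ 2 <> 0 ->
  cphi * (Qr ^ 2 + Qi ^ 2) = - (Pr * Qr + Pi * Qi) ->
  sphi * (Qr ^ 2 + Qi ^ 2) = Pi * Qr - Pr * Qi ->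
  char_re = 0 /\ char_im = 0.
Proof.
  intros HQ HC HS; split; apply (Rmult_eq_reg_r (Qr ^ 2 + Qi ^ 2)); auto; unfold char_re, char_im.
  - transitivity (Pr * (Qr ^ 2 + Qi ^ 2) + Qr * (cphi * (Qr ^ 2 + Qi ^ 2))
                  + Qi * (sphi * (Qr ^ 2 + Qi ^ 2)));
      [ring | rewrite HC, HS; ring].
  - transitivity (Pi * (Qr ^ 2 + Qi ^ 2) + Qi * (cphi * (Qr ^ 2 + Qi ^ 2))
                  - Qr * (sphi * (Qr ^ 2 + Qi ^ 2)));
      [ring | rewrite HC, HS; ring].
Qed.

Hypothesis Hre : char_re = 0.
Hypothesis Him : char_im = 0.

Lemma char_root_modulus : cphi ^ 2 + sphi ^ 2 = 1 -> Pr ^ 2 + Pi ^ 2 = Qr ^ 2 + Qi ^ 2.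
Proof.
  intros Hunit; unfold char_re, char_im in *.
  replace Pr with (- (Qr * cphi + Qi * sphi)) by lra.
  replace Pi with (- (Qi * cphi - Qr * sphi)) by lra.
  transitivity ((Qr ^ 2 + Qi ^ 2) * (cphi ^ 2 + sphi ^ 2)); [ring | rewrite Hunit; ring].
Qed.

Lemma char_root_cos : cphi * (Qr ^ 2 + Qi ^ 2) = - (Pr * Qr + Pi * Qi).
Proof.
  apply Rminus_diag_uniq; transitivity (Qr * char_re + Qi * char_im);
    [unfold char_re, char_im; ring | rewrite Hre, Him; ring].
Qed.

Lemma char_root_sin : sphi * (Qr ^ 2 + Qi ^ 2) = Pi * Qr - Pr * Qi.
Proof.
  apply Rminus_diag_uniq; transitivity (Qi * char_re - Qr * char_im);
    [unfold char_re, char_im; ring | rewrite Hre, Him; ring].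
Qed.

Variables Prd Pid Qrd Qid phid : R.

(* Derivatives of [char_re] and [char_im] along a path with [(cphi, sphi) = (cos phi, sin phi)]
   on which [Pr, Pi, Qr, Qi, phi] have derivatives [Prd, Pid, Qrd, Qid, phid]. *)
Definition char_re_deriv := Prd + Qrd * cphi + Qid * sphi + phid * (Qi * cphi - Qr * sphi).
Definition char_im_deriv := Pid + Qid * cphi - Qrd * sphi - phid * (Qr * cphi + Qi * sphi).

Hypothesis Hre' : char_re_deriv = 0.
Hypothesis Him' : char_im_deriv = 0.

Lemma char_root_modulus_deriv :
  cphi ^ 2 + sphi ^ 2 = 1 -> Pr * Prd + Pi * Pid = Qr * Qrd + Qi * Qid.
Proof.
  intros Hunit; apply Rminus_diag_uniq.
  set (A := Qr * cphi + Qi * sphi); set (B := Qi * cphi - Qr * sphi).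
  transitivity (char_re * (char_re_deriv - (Qrd * cphi + Qid * sphi + phid * B)) - A * char_re_deriv
    + char_im * (char_im_deriv - (Qid * cphi - Qrd * sphi - phid * A)) - B * char_im_deriv
    + (cphi ^ 2 + sphi ^ 2 - 1) * (Qr * Qrd + Qi * Qid)).
  - unfold char_re, char_im, char_re_deriv, char_im_deriv, A, B; ring.
  - rewrite Hre, Him, Hre', Him', Hunit; ring.
Qed.

Lemma char_root_phase_deriv :
  sphi * phid * (Qr ^ 2 + Qi ^ 2) ^ 2 =
  (Prd * Qr + Pr * Qrd + Pid * Qi + Pi * Qid) * (Qr ^ 2 + Qi ^ 2)
  - (Pr * Qr + Pi * Qi) * (2 * (Qr * Qrd + Qi * Qid)).
Proof.
  apply Rminus_diag_uniq.
  transitivity (- (char_re_deriv * Qr + char_re * Qrd + char_im_deriv * Qi + char_im * Qid)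
      * (Qr ^ 2 + Qi ^ 2) + (char_re * Qr + char_im * Qi) * (2 * (Qr * Qrd + Qi * Qid))).
  - unfold char_re, char_im, char_re_deriv, char_im_deriv; ring.
  - rewrite Hre, Him, Hre', Him'; ring.
Qed.

End RootsOnImaginaryAxis.

(* [P] and [Q] at [l = a + i b], with the coefficients of (C) written in terms of
   [x = x_+(tau)]: [p = s + x], [alpha = s x], [c = s (1 - 2 x)], [q = - s]. *)
Definition P_re (s x a b : R) : R := a ^ 2 - b ^ 2 + (s + x) * a + s * x.
Definition P_im (s x a b : R) : R := (2 * a + s + x) * b.
Definition Q_re (s x a : R) : R := s * (1 - 2 * x - a).
Definition Q_im (s b : R) : R := - s * b.

Lemma charfun_eq s Y tau a b : Y <> 0 ->
  let x := x_plus s Y tau in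
  let e := exp (- (a * tau)) in
  charfun s Y tau (a, b) =
  (char_re (P_re s x a b) (e * Q_re s x a) (e * Q_im s b) (cos (b * tau)) (sin (b * tau)),
   char_im (P_im s x a b) (e * Q_re s x a) (e * Q_im s b) (cos (b * tau)) (sin (b * tau))).
Proof.
  intros HY x e.
  unfold charfun, Cexp, p_coef, q_coef, c_coef, alpha_coef, x, x_plus, e; simpl.
  replace (- a * tau - - b * 0) with (- (a * tau)) by ring.
  replace (- a * 0 + - b * tau) with (- (b * tau)) by ring.
  rewrite cos_neg, sin_neg.
  unfold char_re, char_im, P_re, P_im, Q_re, Q_im.
  apply injective_projections; simpl; field; auto.
Qed.

(* [i w] solves [P(i w) + Q(i w) exp (- i phi) = 0]; the phase [phi] stands for [w tau]. *)
Definition imag_root (s x w phi : R) : Prop :=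
  char_re (P_re s x 0 w) (Q_re s x 0) (Q_im s w) (cos phi) (sin phi) = 0 /\
  char_im (P_im s x 0 w) (Q_re s x 0) (Q_im s w) (cos phi) (sin phi) = 0.

Lemma charfun_imag_axis s Y tau w : Y <> 0 ->
  charfun s Y tau (0, w) = 0%C <-> imag_root s (x_plus s Y tau) w (w * tau).
Proof.
  intros HY; rewrite charfun_eq by exact HY.
  replace (exp (- (0 * tau))) with 1 by (rewrite Rmult_0_l, Ropp_0, exp_0; reflexivity).
  rewrite !Rmult_1_l; unfold imag_root.
  split; [intros H; injection H; auto | intros [-> ->]; reflexivity].
Qed.

Lemma imag_root_opp s x w phi : imag_root s x w phi -> imag_root s x (- w) (- phi).
Proof.
  unfold imag_root, char_re, char_im, P_re, P_im, Q_re, Q_im.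
  rewrite cos_neg, sin_neg; intros [H1 H2]; split; lra.
Qed.

(* [|P(i w)|^2 - |Q(i w)|^2] *)
Definition mod_poly (s x w : R) : R := w ^ 4 + x ^ 2 * w ^ 2 - s ^ 2 * ((1 - x) * (1 - 3 * x)).

Lemma imag_root_mod_poly s x w phi : imag_root s x w phi -> mod_poly s x w = 0.
Proof.
  intros [Hre Him].
  assert (H := char_root_modulus _ _ _ _ _ _ Hre Him).
  rewrite <- (sin2_cos2 phi), !Rsqr_pow2, Rplus_comm in H; specialize (H eq_refl).
  unfold mod_poly; unfold P_re, P_im, Q_re, Q_im in H; nra.
Qed.

Lemma mod_poly_root_sqr_unique s x u v :
  mod_poly s x u = 0 -> mod_poly s x v = 0 -> u ^ 2 = v ^ 2.
Proof.
  intros Hu Hv.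
  assert (E : (u ^ 2 - v ^ 2) * (u ^ 2 + v ^ 2 + x ^ 2) = mod_poly s x u - mod_poly s x v)
    by (unfold mod_poly; ring).
  rewrite Hu, Hv, Rminus_0_r in E.
  apply Rmult_integral in E as [E | E]; [lra | nra].
Qed.

Definition omega_pos (s x : R) : R :=
  sqrt (/ 2 * (- x ^ 2 + sqrt (x ^ 4 + s ^ 2 * (12 * x ^ 2 - 16 * x + 4)))).

Lemma omega_pos_spec s x : 0 < s -> 0 < x < 1 / 3 ->
  0 < omega_pos s x /\
  sqrt (x ^ 4 + s ^ 2 * (12 * x ^ 2 - 16 * x + 4)) = 2 * omega_pos s x ^ 2 + x ^ 2 /\
  mod_poly s x (omega_pos s x) = 0.
Proof.
  intros Hs Hx.
  assert (Hd : x ^ 4 < x ^ 4 + s ^ 2 * (12 * x ^ 2 - 16 * x + 4))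
    by (assert (0 < s ^ 2 * ((1 - x) * (1 - 3 * x))) by (apply Rmult_lt_0_compat; nra); lra).
  set (r := sqrt (x ^ 4 + s ^ 2 * (12 * x ^ 2 - 16 * x + 4))) in *.
  assert (Hr2 : r ^ 2 = x ^ 4 + s ^ 2 * (12 * x ^ 2 - 16 * x + 4))
    by (unfold r; rewrite pow2_sqrt; nra).
  assert (Hr : x ^ 2 < r) by (assert (0 <= r) by apply sqrt_pos; nra).
  assert (Hw2 : omega_pos s x ^ 2 = / 2 * (- x ^ 2 + r))
    by (unfold omega_pos; fold r; apply pow2_sqrt; lra).
  split; [unfold omega_pos; fold r; apply sqrt_lt_R0; lra |].
  split; [lra |].
  unfold mod_poly; replace (omega_pos s x ^ 4) with ((omega_pos s x ^ 2) ^ 2) by ring.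
  rewrite Hw2; nra.
Qed.

Lemma mod_poly_root_eq_omega_pos s x w : 0 < s -> 0 < x < 1 / 3 -> 0 < w ->
  mod_poly s x w = 0 -> w = omega_pos s x.
Proof.
  intros Hs Hx Hw Hm.
  destruct (omega_pos_spec s x Hs Hx) as [Hp [_ Hmp]].
  assert (H := mod_poly_root_sqr_unique s x w (omega_pos s x) Hm Hmp).
  nra.
Qed.

Definition phase_cos (s x w : R) : R :=
  - (P_re s x 0 w * Q_re s x 0 + P_im s x 0 w * Q_im s w) / (Q_re s x 0 ^ 2 + Q_im s w ^ 2).
Definition phase_sin (s x w : R) : R :=
  (P_im s x 0 w * Q_re s x 0 - P_re s x 0 w * Q_im s w) / (Q_re s x 0 ^ 2 + Q_im s w ^ 2).

Lemma Q_norm_pos s x w : 0 < s -> w <> 0 -> 0 < Q_re s x 0 ^ 2 + Q_im s w ^ 2.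
Proof.
  intros Hs Hw; unfold Q_im.
  assert (0 < (- s * w) ^ 2) by (apply pow2_gt_0; nra).
  assert (0 <= Q_re s x 0 ^ 2) by apply pow2_ge_0; lra.
Qed.

Lemma imag_root_phase s x w phi : 0 < s -> w <> 0 -> imag_root s x w phi ->
  cos phi = phase_cos s x w /\ sin phi = phase_sin s x w.
Proof.
  intros Hs Hw [Hre Him]; assert (HQ := Q_norm_pos s x w Hs Hw).
  unfold phase_cos, phase_sin; split; apply (Rmult_eq_reg_r (Q_re s x 0 ^ 2 + Q_im s w ^ 2));
    try lra.
  - rewrite (char_root_cos _ _ _ _ _ _ Hre Him); field; lra.
  - rewrite (char_root_sin _ _ _ _ _ _ Hre Him); field; lra.
Qed.

Lemma imag_root_of_phase s x w phi : 0 < s -> w <> 0 ->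
  cos phi = phase_cos s x w -> sin phi = phase_sin s x w -> imag_root s x w phi.
Proof.
  intros Hs Hw Hc Hsn; assert (HQ := Q_norm_pos s x w Hs Hw).
  apply char_root_of_cos_sin; [lra | rewrite Hc | rewrite Hsn];
    unfold phase_cos, phase_sin; field; lra.
Qed.

Lemma phase_cos_sin_unit s x w : 0 < s -> w <> 0 -> mod_poly s x w = 0 ->
  phase_cos s x w ^ 2 + phase_sin s x w ^ 2 = 1.
Proof.
  intros Hs Hw Hm; assert (HQ := Q_norm_pos s x w Hs Hw).
  set (D := Q_re s x 0 ^ 2 + Q_im s w ^ 2) in *.
  assert (Lagrange : (P_re s x 0 w * Q_re s x 0 + P_im s x 0 w * Q_im s w) ^ 2
                     + (P_im s x 0 w * Q_re s x 0 - P_re s x 0 w * Q_im s w) ^ 2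
                     = D * D + mod_poly s x w * D)
    by (unfold D, mod_poly, P_re, P_im, Q_re, Q_im; ring).
  rewrite Hm, Rmult_0_l, Rplus_0_r in Lagrange.
  unfold phase_cos, phase_sin; fold D.
  apply (Rmult_eq_reg_r (D * D)); [| nra].
  field_simplify; [| lra]; lra.
Qed.

Lemma mod_poly_root_lt s x w : 0 < s -> 0 < x <= 1 / 3 -> mod_poly s x w = 0 ->
  w ^ 2 < s * (1 - x) + x * (1 - 2 * x).
Proof.
  unfold mod_poly; intros Hs Hx Hm.
  assert (H0 : 0 <= x * (1 - 2 * x)) by (apply Rmult_le_pos; lra).
  assert (H1 : s ^ 2 * ((1 - x) * (1 - 3 * x)) < (s * (1 - x)) ^ 2).
  { assert (0 < s ^ 2 * (1 - x) * (2 * x)) by (repeat apply Rmult_lt_0_compat; nra).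
    nra. }
  destruct (Rlt_or_le (w ^ 2) (s * (1 - x) + x * (1 - 2 * x))) as [H | H]; [exact H | exfalso].
  assert (Hsq : (s * (1 - x)) ^ 2 <= (w ^ 2) ^ 2) by (apply pow_incr; split; nra).
  assert (0 <= x ^ 2 * w ^ 2) by (apply Rmult_le_pos; apply pow2_ge_0).
  replace (w ^ 4) with ((w ^ 2) ^ 2) in Hm by ring.
  lra.
Qed.

Lemma phase_sin_pos s x w : 0 < s -> 0 < x <= 1 / 3 -> 0 < w -> mod_poly s x w = 0 ->
  0 < phase_sin s x w.
Proof.
  intros Hs Hx Hw Hm; assert (HQ := Q_norm_pos s x w Hs ltac:(lra)).
  assert (Hlt := mod_poly_root_lt s x w Hs Hx Hm).
  unfold phase_sin; apply Rdiv_lt_0_compat; [| exact HQ].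
  replace (P_im s x 0 w * Q_re s x 0 - P_re s x 0 w * Q_im s w)
    with (s * w * (s * (1 - x) + x * (1 - 2 * x) - w ^ 2))
    by (unfold P_re, P_im, Q_re, Q_im; ring).
  apply Rmult_lt_0_compat; [nra | lra].
Qed.

Lemma cos_sin_eq_mod_2PI phi th : cos phi = cos th -> sin phi = sin th ->
  exists m : Z, phi = th + 2 * IZR m * PI.
Proof.
  intros Hc Hs.
  assert (H : cos (2 * ((phi - th) / 2)) = 1).
  { replace (2 * ((phi - th) / 2)) with (phi - th) by field.
    rewrite cos_minus, Hc, Hs; rewrite <- (sin2_cos2 th); unfold Rsqr; ring. }
  rewrite cos_2a_sin in H.
  destruct (sin_eq_0_0 ((phi - th) / 2)) as [m Hm]; [nra |].
  exists m; lra.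
Qed.

Lemma phase_cos_acos s x w : 0 < s -> 0 < x <= 1 / 3 -> 0 < w -> mod_poly s x w = 0 ->
  -1 < phase_cos s x w < 1 /\ sin (acos (phase_cos s x w)) = phase_sin s x w.
Proof.
  intros Hs Hx Hw Hm.
  assert (Hunit := phase_cos_sin_unit s x w Hs ltac:(lra) Hm).
  assert (Hpos := phase_sin_pos s x w Hs Hx Hw Hm).
  assert (Hb : -1 < phase_cos s x w < 1) by (split; nra).
  split; [exact Hb |].
  rewrite sin_acos by lra; rewrite <- (sqrt_pow2 (phase_sin s x w)) by lra.
  f_equal; unfold Rsqr; lra.
Qed.

Lemma imag_root_iff s x w phi : 0 < s -> 0 < x < 1 / 3 -> 0 < w -> 0 < phi ->
  imag_root s x w phi <->
  w = omega_pos s x /\ exists n : nat, phi = acos (phase_cos s x w) + 2 * INR n * PI.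
Proof.
  intros Hs Hx Hw Hphi; split.
  - intros Hroot.
    assert (Hm := imag_root_mod_poly s x w phi Hroot).
    destruct (imag_root_phase s x w phi Hs ltac:(lra) Hroot) as [Hc Hsn].
    destruct (phase_cos_acos s x w Hs ltac:(lra) Hw Hm) as [Hb Hacos].
    split; [exact (mod_poly_root_eq_omega_pos s x w Hs Hx Hw Hm) |].
    destruct (cos_sin_eq_mod_2PI phi (acos (phase_cos s x w))) as [m Hphi_m];
      [rewrite cos_acos by lra | rewrite Hacos |]; try assumption.
    assert (Hm0 : (0 <= m)%Z).
    { apply le_IZR; assert (Hacos_le := acos_bound (phase_cos s x w)).
      assert (HPI := PI_RGT_0); apply Rnot_lt_le; intros Hneg.
      assert (IZR m <= -1) by (apply IZR_le; apply lt_IZR in Hneg; lia).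
      nra. }
    exists (Z.to_nat m); rewrite INR_IZR_INZ, Z2Nat.id by exact Hm0; exact Hphi_m.
  - intros [-> [n ->]].
    destruct (omega_pos_spec s x Hs Hx) as [Hw' [_ Hm]].
    destruct (phase_cos_acos s x _ Hs ltac:(lra) Hw' Hm) as [Hb Hacos].
    apply imag_root_of_phase; [exact Hs | lra | |].
    + rewrite cos_period, cos_acos; lra.
    + rewrite sin_period; exact Hacos.
Qed.

Lemma imag_root_sin_pos s x w phi : 0 < s -> 0 < x <= 1 / 3 -> 0 < w ->
  imag_root s x w phi -> 0 < sin phi.
Proof.
  intros Hs Hx Hw Hroot.
  rewrite (proj2 (imag_root_phase s x w phi Hs ltac:(lra) Hroot)).
  exact (phase_sin_pos s x w Hs Hx Hw (imag_root_mod_poly s x w phi Hroot)).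
Qed.

Lemma imag_root_multiple s x w (k : Z) phi : 0 < w -> mod_poly s x w = 0 ->
  imag_root s x (IZR k * w) phi -> k = 1%Z \/ k = (-1)%Z.
Proof.
  intros Hw Hm Hroot.
  assert (H := mod_poly_root_sqr_unique s x _ _ (imag_root_mod_poly _ _ _ _ Hroot) Hm).
  assert (0 < w ^ 2) by (apply pow_lt; lra).
  assert (Hk : IZR (k * k) = 1) by (rewrite mult_IZR; nra).
  apply eq_IZR in Hk; nia.
Qed.

Lemma imag_root_phase_0 s x w : 0 < x -> 0 < w -> ~ imag_root s x w 0.
Proof.
  intros Hx Hw [_ Him]; revert Him.
  unfold char_im, P_im, Q_re, Q_im; rewrite cos_0, sin_0; nra.
Qed.

Lemma imag_root_x_third s w phi : 0 < w -> ~ imag_root s (1 / 3) w phi.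
Proof.
  intros Hw Hroot; apply imag_root_mod_poly in Hroot; revert Hroot; unfold mod_poly.
  assert (0 < w ^ 2) by (apply pow_lt; lra).
  replace (w ^ 4) with ((w ^ 2) ^ 2) by ring; nra.
Qed.

(* Derivatives in [tau] of [P_re s x 0 w], [P_im s x 0 w], [Q_re s x 0] and [Q_im s w] when
   [x' = s x] and [w' = b]; [phase_cos_deriv] is then the derivative of [phase_cos s x w]. *)
Definition dP_re (s x w b : R) : R := s * (s * x) - 2 * w * b.
Definition dP_im (s x w b : R) : R := s * x * w + (s + x) * b.
Definition dQ_re (s x : R) : R := - 2 * s * (s * x).
Definition dQ_im (s b : R) : R := - s * b.

Definition phase_cos_deriv (s x w b : R) : R :=
  let Pr := P_re s x 0 w in let Pi := P_im s x 0 w in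
  let Qr := Q_re s x 0 in let Qi := Q_im s w in
  - ((dP_re s x w b * Qr + Pr * dQ_re s x + dP_im s x w b * Qi + Pi * dQ_im s b)
       * (Qr ^ 2 + Qi ^ 2)
     - (Pr * Qr + Pi * Qi) * (2 * (Qr * dQ_re s x + Qi * dQ_im s b))) / (Qr ^ 2 + Qi ^ 2) ^ 2.

Lemma mod_poly_branch_deriv s x w b :
  2 * (P_re s x 0 w * dP_re s x w b + P_im s x 0 w * dP_im s x w b
       - (Q_re s x 0 * dQ_re s x + Q_im s w * dQ_im s b))
  = (4 * w ^ 3 + 2 * x ^ 2 * w) * b + (2 * x * w ^ 2 + s ^ 2 * (4 - 6 * x)) * (s * x).
Proof. unfold P_re, P_im, Q_re, Q_im, dP_re, dP_im, dQ_re, dQ_im; ring. Qed.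

Section Delay.

Variables s Y : R.
Hypothesis Hs : 0 < s.
Hypothesis HY : Y > 3 * s.

Lemma x_plus_pos t : 0 < x_plus s Y t.
Proof. unfold x_plus; apply Rmult_lt_0_compat; [apply Rdiv_lt_0_compat; lra | apply exp_pos]. Qed.

Lemma exp_s_tau_star : exp (s * tau_star s Y) = Y / (3 * s).
Proof.
  unfold tau_star; replace (s * (/ s * ln (Y / (3 * s)))) with (ln (Y / (3 * s))) by (field; lra).
  apply exp_ln, Rdiv_lt_0_compat; lra.
Qed.

Lemma x_plus_tau_star : x_plus s Y (tau_star s Y) = 1 / 3.
Proof. unfold x_plus; rewrite exp_s_tau_star; field; lra. Qed.

Lemma x_plus_lt_third t : t < tau_star s Y -> x_plus s Y t < 1 / 3.
Proof.
  intros Ht; rewrite <- x_plus_tau_star; unfold x_plus.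
  apply Rmult_lt_compat_l; [apply Rdiv_lt_0_compat; lra |].
  apply exp_increasing, Rmult_lt_compat_l; lra.
Qed.

Lemma is_derive_x_plus t : is_derive (x_plus s Y) t (s * x_plus s Y t).
Proof. unfold x_plus; auto_derive; [exact I | ring]. Qed.

Lemma h2_eq_phase_cos w t : w <> 0 -> h2 s Y w t = phase_cos s (x_plus s Y t) w.
Proof.
  intros Hw.
  assert (Hsw : 0 < (s * w) ^ 2) by (apply pow2_gt_0, Rmult_integral_contrapositive; lra).
  assert (0 < w ^ 2) by (apply pow2_gt_0; exact Hw).
  assert (0 <= (1 - 2 * x_plus s Y t) ^ 2) by apply pow2_ge_0.
  unfold h2, phase_cos, P_re, P_im, Q_re, Q_im; field; repeat split; nra.
Qed.

Lemma crossing_of_imag_root t w : 0 <= t <= tau_star s Y -> 0 < w ->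
  charfun s Y t (0, w) = 0%C -> exists n, is_tau_n s Y n t.
Proof.
  intros Ht Hw Hroot; apply charfun_imag_axis in Hroot; [| lra].
  assert (Ht_star : t < tau_star s Y).
  { destruct (Req_dec t (tau_star s Y)) as [-> | ]; [| lra].
    rewrite x_plus_tau_star in Hroot; contradiction (imag_root_x_third s w _ Hw Hroot). }
  assert (Ht0 : 0 < t).
  { destruct (Req_dec t 0) as [-> | ]; [| lra]; rewrite Rmult_0_r in Hroot.
    contradiction (imag_root_phase_0 s _ w (x_plus_pos 0) Hw Hroot). }
  assert (Hx : 0 < x_plus s Y t < 1 / 3) by (split; [apply x_plus_pos | now apply x_plus_lt_third]).
  apply imag_root_iff in Hroot as [Homega [n Hn]];
    [| exact Hs | exact Hx | exact Hw | apply Rmult_lt_0_compat; lra].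
  exists n; split; [lra |]; unfold theta.
  change (omega_plus s Y t) with (omega_pos s (x_plus s Y t)); rewrite <- Homega.
  rewrite h2_eq_phase_cos by lra; lra.
Qed.

Lemma imag_root_of_crossing n t : is_tau_n s Y n t ->
  0 < x_plus s Y t < 1 / 3 /\ 0 < omega_plus s Y t /\
  imag_root s (x_plus s Y t) (omega_plus s Y t) (omega_plus s Y t * t).
Proof.
  intros [Ht Hn]; unfold theta in Hn.
  assert (Hx : 0 < x_plus s Y t < 1 / 3)
    by (split; [apply x_plus_pos | apply x_plus_lt_third; lra]).
  destruct (omega_pos_spec s _ Hs Hx) as [Hw _].
  change (omega_plus s Y t) with (omega_pos s (x_plus s Y t)) in *.
  split; [exact Hx | split; [exact Hw |]].
  apply imag_root_iff; [exact Hs | exact Hx | exact Hw | apply Rmult_lt_0_compat; lra |].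
  split; [reflexivity |]; exists n.
  rewrite h2_eq_phase_cos in Hn by lra; lra.
Qed.

Lemma charfun_roots_of_crossing n t : is_tau_n s Y n t ->
  charfun s Y t (0, omega_plus s Y t) = 0%C /\ charfun s Y t (0, - omega_plus s Y t) = 0%C.
Proof.
  intros Hn; destruct (imag_root_of_crossing n t Hn) as [_ [_ Hroot]].
  split; apply charfun_imag_axis; try lra; [exact Hroot |].
  replace (- omega_plus s Y t * t) with (- (omega_plus s Y t * t)) by ring.
  now apply imag_root_opp.
Qed.

Lemma charfun_deriv_imag_axis_Im t w :
  Im (charfun_deriv s Y t (0, w)) =
  2 * w + s * sin (w * t) + t * (s * w * cos (w * t) + Q_re s (x_plus s Y t) 0 * sin (w * t)).
Proof.
  unfold charfun_deriv, Cexp, p_coef, q_coef, c_coef, Q_re, x_plus; simpl.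
  replace (- 0 * t - - w * 0) with 0 by ring; replace (- 0 * 0 + - w * t) with (- (w * t)) by ring.
  rewrite exp_0, cos_neg, sin_neg; field; lra.
Qed.

Lemma imag_root_simple t w : 0 < t -> 0 < w -> 0 < sin (w * t) ->
  imag_root s (x_plus s Y t) w (w * t) ->
  charfun_deriv s Y t (0, w) <> 0%C /\ charfun_deriv s Y t (0, - w) <> 0%C.
Proof.
  intros Ht Hw Hsin [_ Him].
  assert (Hx := x_plus_pos t).
  assert (Hpos : 0 < Im (charfun_deriv s Y t (0, w))).
  { rewrite charfun_deriv_imag_axis_Im.
    unfold char_im, P_im, Q_im in Him.
    replace (s * w * cos (w * t) + Q_re s (x_plus s Y t) 0 * sin (w * t))
      with ((s + x_plus s Y t) * w) by lra.
    assert (0 < t * ((s + x_plus s Y t) * w)) by (apply Rmult_lt_0_compat; nra).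
    nra. }
  assert (Hneg : Im (charfun_deriv s Y t (0, - w)) = - Im (charfun_deriv s Y t (0, w))).
  { rewrite !charfun_deriv_imag_axis_Im; replace (- w * t) with (- (w * t)) by ring.
    rewrite cos_neg, sin_neg; ring. }
  split; intros H0; [rewrite H0 in Hpos | rewrite H0 in Hneg]; simpl in *; lra.
Qed.

Lemma is_derive_omega_plus t b : 0 < x_plus s Y t < 1 / 3 ->
  let x := x_plus s Y t in let w := omega_plus s Y t in
  (4 * w ^ 3 + 2 * x ^ 2 * w) * b + (2 * x * w ^ 2 + s ^ 2 * (4 - 6 * x)) * (s * x) = 0 ->
  is_derive (omega_plus s Y) t b.
Proof.
  intros Hx x w Hb; fold x in Hx.
  destruct (omega_pos_spec s x Hs Hx) as [Hw [Hr _]]; change (omega_pos s x) with w in Hw, Hr.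
  (* stated for any [a] ring-equal to the radicand, to match the raw output of [auto_derive] *)
  assert (Hr' : forall a, a = x ^ 4 + s ^ 2 * (12 * x ^ 2 - 16 * x + 4) ->
                          sqrt a = 2 * w ^ 2 + x ^ 2)
    by (intros a ->; exact Hr).
  assert (Hw' : forall a, a = w ^ 2 -> sqrt a = w) by (intros a ->; apply sqrt_pow2; lra).
  assert (Hdisc : 0 < x ^ 4 + s ^ 2 * (12 * x ^ 2 - 16 * x + 4))
    by (apply Rnot_le_lt; intros Hle; rewrite sqrt_neg_0 in Hr by exact Hle; nra).
  unfold omega_plus; auto_derive; change (fun u => x_plus s Y u) with (x_plus s Y); fold x.
  - rewrite Hr' by ring.
    repeat split; try (eexists; apply is_derive_x_plus); clearbody x w; [lra |].
    apply Rmult_lt_0_compat; nra.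
  - rewrite (is_derive_unique _ _ _ (is_derive_x_plus t)); fold x.
    rewrite Hr' by ring; rewrite Hw' by field; clearbody x w.
    assert (Hcoef : 0 < 4 * w ^ 3 + 2 * x ^ 2 * w)
      by (assert (0 < w ^ 3) by (apply pow_lt; lra); nra).
    apply (Rmult_eq_reg_l (4 * w ^ 3 + 2 * x ^ 2 * w)); [| lra].
    replace ((4 * w ^ 3 + 2 * x ^ 2 * w) * b)
      with (- ((2 * x * w ^ 2 + s ^ 2 * (4 - 6 * x)) * (s * x))) by lra.
    assert (0 < 2 * w ^ 2 + x ^ 2) by nra.
    field; lra.
Qed.

Lemma is_derive_h2 t b : 0 < omega_plus s Y t -> is_derive (omega_plus s Y) t b ->
  is_derive (fun u => h2 s Y (omega_plus s Y u) u) t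
    (phase_cos_deriv s (x_plus s Y t) (omega_plus s Y t) b).
Proof.
  intros Hw Hb.
  assert (Hsw : 0 < (s * omega_plus s Y t) ^ 2) by (apply pow_lt; nra).
  assert (0 <= (1 - 2 * x_plus s Y t) ^ 2) by apply pow2_ge_0.
  unfold h2; auto_derive; repeat split;
    lazymatch goal with
    | |- ex_derive (fun _ => x_plus _ _ _) _ => eexists; apply is_derive_x_plus
    | |- ex_derive (fun _ => omega_plus _ _ _) _ => eexists; exact Hb
    | _ => idtac
    end.
  - apply Rgt_not_eq, Rmult_lt_0_compat; [lra | nra].
  - change (fun u => x_plus s Y u) with (x_plus s Y).
    change (fun u => omega_plus s Y u) with (omega_plus s Y).
    rewrite (is_derive_unique _ _ _ (is_derive_x_plus t)), (is_derive_unique _ _ _ Hb).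
    unfold phase_cos_deriv, dP_re, dP_im, dQ_re, dQ_im, P_re, P_im, Q_re, Q_im.
    set (x := x_plus s Y t) in *; set (w := omega_plus s Y t) in *; clearbody x w.
    field; repeat split; nra.
Qed.

Lemma is_derive_theta t b : 0 < omega_plus s Y t -> -1 < h2 s Y (omega_plus s Y t) t < 1 ->
  is_derive (omega_plus s Y) t b ->
  is_derive (theta s Y) t
    (phase_cos_deriv s (x_plus s Y t) (omega_plus s Y t) b
     * (-1 / sqrt (1 - h2 s Y (omega_plus s Y t) t ^ 2))).
Proof.
  intros Hw Hh Hb.
  exact (is_derive_comp acos (fun u => h2 s Y (omega_plus s Y u) u) t _ _
           (is_derive_acos _ Hh) (is_derive_h2 t b Hw Hb)).
Qed.

Lemma is_derive_charfun_branch (mu nu : R -> R) t0 :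
  ex_derive mu t0 -> ex_derive nu t0 -> mu t0 = 0 -> Derive mu t0 = 0 ->
  let x := x_plus s Y t0 in let w := nu t0 in let b := Derive nu t0 in
  is_derive (fun t => fst (charfun s Y t (mu t, nu t))) t0
    (char_re_deriv (Q_re s x 0) (Q_im s w) (cos (w * t0)) (sin (w * t0))
       (dP_re s x w b) (dQ_re s x) (dQ_im s b) (b * t0 + w)) /\
  is_derive (fun t => snd (charfun s Y t (mu t, nu t))) t0
    (char_im_deriv (Q_re s x 0) (Q_im s w) (cos (w * t0)) (sin (w * t0))
       (dP_im s x w b) (dQ_re s x) (dQ_im s b) (b * t0 + w)).
Proof.
  intros Hexmu Hexnu Hmu0 Hdmu x w b.
  split; (eapply is_derive_ext; [intros t; rewrite charfun_eq by lra; reflexivity |]);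
    cbn [fst snd]; unfold char_re, char_im, P_re, P_im, Q_re, Q_im; auto_derive; repeat split;
    lazymatch goal with
    | |- ex_derive (fun _ => x_plus _ _ _) _ => eexists; apply is_derive_x_plus
    | |- ex_derive (fun _ => mu _) _ => exact Hexmu
    | |- ex_derive (fun _ => nu _) _ => exact Hexnu
    | _ => idtac
    end;
    change (fun u => x_plus s Y u) with (x_plus s Y); change (fun u => mu u) with mu;
    change (fun u => nu u) with nu;
    rewrite (is_derive_unique _ _ _ (is_derive_x_plus t0)), Hdmu, Hmu0; fold x w b;
    replace (exp (- (0 * t0))) with 1 by (rewrite Rmult_0_l, Ropp_0, exp_0; reflexivity);
    unfold char_re_deriv, char_im_deriv, dP_re, dP_im, dQ_re, dQ_im, Q_re, Q_im; ring.
Qed.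

Lemma root_branch_deriv (lam : R -> C) t0 delta : 0 < delta ->
  (forall t, Rabs (t - t0) < delta -> charfun s Y t (lam t) = 0%C) ->
  Re (lam t0) = 0 -> Derive (fun t => Re (lam t)) t0 = 0 ->
  ex_derive (fun t => Re (lam t)) t0 -> ex_derive (fun t => Im (lam t)) t0 ->
  let x := x_plus s Y t0 in let w := Im (lam t0) in let b := Derive (fun t => Im (lam t)) t0 in
  char_re_deriv (Q_re s x 0) (Q_im s w) (cos (w * t0)) (sin (w * t0))
    (dP_re s x w b) (dQ_re s x) (dQ_im s b) (b * t0 + w) = 0 /\
  char_im_deriv (Q_re s x 0) (Q_im s w) (cos (w * t0)) (sin (w * t0))
    (dP_im s x w b) (dQ_re s x) (dQ_im s b) (b * t0 + w) = 0.
Proof.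
  intros Hdelta Hroot Hmu0 Hdmu Hexmu Hexnu x w b.
  assert (Hlam : forall t, lam t = (Re (lam t), Im (lam t)))
    by (intros t; destruct (lam t); reflexivity).
  assert (Hzero : forall g : R -> R,
             (forall t, Rabs (t - t0) < delta -> g t = 0) -> is_derive g t0 0).
  { intros g Hg; apply (is_derive_ext_loc (fun _ => 0)).
    - exists (mkposreal delta Hdelta); intros t Ht; symmetry; exact (Hg t Ht).
    - auto_derive; auto. }
  assert (Huniq : forall (f : R -> R) l1 l2, is_derive f t0 l1 -> is_derive f t0 l2 -> l1 = l2)
    by (intros f l1 l2 H1 H2; rewrite <- (is_derive_unique _ _ _ H1);
        exact (is_derive_unique _ _ _ H2)).
  destruct (is_derive_charfun_branch _ _ t0 Hexmu Hexnu Hmu0 Hdmu) as [Dre Dim].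
  split; [apply (Huniq (fun t => fst (charfun s Y t (lam t))))
         | apply (Huniq (fun t => snd (charfun s Y t (lam t))))];
    try (apply Hzero; intros t Ht; rewrite Hroot by exact Ht; reflexivity);
    (eapply is_derive_ext; [intros t; rewrite Hlam; reflexivity |]); assumption.
Qed.

Lemma derive_phase_eq_of_stationary_branch n t0 (lam : R -> C) delta :
  is_tau_n s Y n t0 -> 0 < delta ->
  (forall t, Rabs (t - t0) < delta -> charfun s Y t (lam t) = 0%C) ->
  lam t0 = (0, omega_plus s Y t0) ->
  ex_derive (fun t => Re (lam t)) t0 -> ex_derive (fun t => Im (lam t)) t0 ->
  Derive (fun t => Re (lam t)) t0 = 0 ->
  Derive (fun t => t * omega_plus s Y t) t0 = Derive (theta s Y) t0.
Proof.
  intros Hn Hdelta Hroot Hlam0 HexRe HexIm HdRe.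
  destruct (imag_root_of_crossing n t0 Hn) as [Hx [Hw [Hre Him]]].
  destruct (root_branch_deriv lam t0 delta Hdelta Hroot ltac:(rewrite Hlam0; reflexivity)
              HdRe HexRe HexIm) as [Dre Dim].
  rewrite Hlam0 in Dre, Dim; cbn [Im snd] in Dre, Dim.
  set (x := x_plus s Y t0) in *; set (w := omega_plus s Y t0) in *.
  set (b := Derive (fun t => Im (lam t)) t0) in *.
  assert (Hunit : cos (w * t0) ^ 2 + sin (w * t0) ^ 2 = 1)
    by (rewrite <- (sin2_cos2 (w * t0)), !Rsqr_pow2; ring).
  (* differentiating [|P|^2 = |Q|^2] along the branch: [Im lam' = omega_plus'] *)
  assert (Hdw : is_derive (omega_plus s Y) t0 b).
  { apply is_derive_omega_plus; [exact Hx |].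
    rewrite <- mod_poly_branch_deriv; fold x w.
    rewrite (char_root_modulus_deriv _ _ _ _ _ _ Hre Him _ _ _ _ _ Dre Dim Hunit); ring. }
  destruct (imag_root_phase s x w (w * t0) Hs ltac:(lra) (conj Hre Him)) as [Hc _].
  assert (Hsin : 0 < sin (w * t0))
    by (apply (imag_root_sin_pos s x w); [exact Hs | lra | exact Hw | exact (conj Hre Him)]).
  assert (Hh2 : h2 s Y w t0 = cos (w * t0)) by (rewrite Hc; apply h2_eq_phase_cos; lra).
  assert (Hh2_bound : -1 < h2 s Y w t0 < 1) by (rewrite Hh2; split; nra).
  assert (Hsqrt : sqrt (1 - h2 s Y w t0 ^ 2) = sin (w * t0))
    by (rewrite Hh2, <- (sqrt_pow2 (sin (w * t0))) by lra; f_equal; lra).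
  assert (HQ := Q_norm_pos s x w Hs ltac:(lra)).
  (* differentiating [cos phi = phase_cos] along the branch, with [phi = t Im (lam t)] *)
  assert (Hphase : phase_cos_deriv s x w b = - sin (w * t0) * (b * t0 + w)).
  { unfold phase_cos_deriv; cbv zeta.
    rewrite <- (char_root_phase_deriv _ _ _ _ _ _ Hre Him _ _ _ _ _ Dre Dim); field; lra. }
  assert (Hdt : Derive (fun t : R => t * omega_plus s Y t) t0 = w + t0 * b).
  { apply is_derive_unique; auto_derive; [exists b; exact Hdw |].
    change (fun u => omega_plus s Y u) with (omega_plus s Y); rewrite (is_derive_unique _ _ _ Hdw).
    fold w; ring. }
  rewrite Hdt, (is_derive_unique _ _ _ (is_derive_theta t0 b Hw Hh2_bound Hdw)); fold x w.
  rewrite Hphase, Hsqrt; field; lra.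
Qed.

End Delay.

Theorem theorem3p4 (s Y : R) (hs : 0 < s) (hY : Y > 3 * s) :
  (* (C) has a pair of purely imaginary roots iff tau = tau_n^j for some n, j *)
  (forall tau : R, 0 <= tau <= tau_star s Y ->
     ((exists omega : R, 0 < omega /\
         charfun s Y tau (0, omega) = 0%C /\ charfun s Y tau (0, - omega) = 0%C)
      <-> (exists n : nat, is_tau_n s Y n tau)))
  /\
  (forall (n : nat) (tau0 : R), is_tau_n s Y n tau0 ->
     (* +- i omega_+(tau0) are roots *)
     charfun s Y tau0 (0, omega_plus s Y tau0) = 0%C /\
     charfun s Y tau0 (0, - omega_plus s Y tau0) = 0%C /\
     (* they are simple roots *)
     (exists d : C, is_derive (charfun s Y tau0) (0, omega_plus s Y tau0) d /\ d <> 0%C) /\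
     (exists d : C, is_derive (charfun s Y tau0) (0, - omega_plus s Y tau0) d /\ d <> 0%C) /\
     (* no other root is an integer multiple of i omega_+(tau0) *)
     (forall k : Z, k <> 1%Z -> k <> (-1)%Z ->
        charfun s Y tau0 (0, IZR k * omega_plus s Y tau0) <> 0%C) /\
     (* transversality *)
     (Derive (fun t => t * omega_plus s Y t) tau0 <> Derive (theta s Y) tau0 ->
      forall lam : R -> C,
        (exists delta : R, 0 < delta /\
           forall t, Rabs (t - tau0) < delta -> charfun s Y t (lam t) = 0%C) ->
        lam tau0 = (0, omega_plus s Y tau0) ->
        ex_derive (fun t => Re (lam t)) tau0 ->
        ex_derive (fun t => Im (lam t)) tau0 ->
        Derive (fun t => Re (lam t)) tau0 <> 0)).
Proof.
  split.
  - intros tau Htau; split.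
    + intros [w [Hw [Hroot _]]]; exact (crossing_of_imag_root s Y hs hY tau w Htau Hw Hroot).
    + intros [n Hn]; exists (omega_plus s Y tau).
      split; [exact (proj1 (proj2 (imag_root_of_crossing s Y hs hY n tau Hn))) |].
      exact (charfun_roots_of_crossing s Y hs hY n tau Hn).
  - intros n tau0 Hn.
    destruct (charfun_roots_of_crossing s Y hs hY n tau0 Hn) as [Hroot_pos Hroot_neg].
    destruct (imag_root_of_crossing s Y hs hY n tau0 Hn) as [Hx [Hw Hroot]].
    assert (Ht0 : 0 < tau0) by (destruct Hn as [[? ?] _]; lra).
    assert (Hsin := imag_root_sin_pos s (x_plus s Y tau0) _ _ hs ltac:(lra) Hw Hroot).
    destruct (imag_root_simple s Y hs hY tau0 _ Ht0 Hw Hsin Hroot) as [Hd_pos Hd_neg].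
    split; [exact Hroot_pos | split; [exact Hroot_neg | split; [| split; [| split]]]].
    + exists (charfun_deriv s Y tau0 (0, omega_plus s Y tau0)).
      split; [apply is_derive_charfun | exact Hd_pos].
    + exists (charfun_deriv s Y tau0 (0, - omega_plus s Y tau0)).
      split; [apply is_derive_charfun | exact Hd_neg].
    + intros k Hk1 Hk2 Hk; apply charfun_imag_axis in Hk; [| lra].
      destruct (imag_root_multiple _ _ _ k _ Hw (imag_root_mod_poly _ _ _ _ Hroot) Hk);
        contradiction.
    + intros Hneq lam [delta [Hdelta Hbranch]] Hlam0 HexRe HexIm HdRe; apply Hneq.
      exact (derive_phase_eq_of_stationary_branch s Y hs hY n tau0 lam delta Hn Hdelta Hbranch
               Hlam0 HexRe HexIm HdRe).
Qed.
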